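(* Let $\tilde X\in\mathbb{R}^{n\times k}$ have columns of unit Euclidean norm ($\Gamma_{\ell\ell}=1$ for all $\ell$, $\Gamma=\tilde X^t\tilde X$), let $0<\nu<1$, and let $\mathcal{I}\subset\{1,\dots,k\}$ satisfy $\tau(\mathcal{I})\le\nu$. Then for every $x\in\mathbb{R}^n$, $$(1+\nu)^{-1}\sum_{\ell\in\mathcal{I}}\Big(\sum_{i=1}^n x_i\tilde X_{i\ell}\Big)^2\le \|P_{V_{\mathcal{I}}}x\|_2^2\le (1-\nu)^{-1}\sum_{\ell\in\mathcal{I}}\Big(\sum_{i=1}^n x_i\tilde X_{i\ell}\Big)^2.$$
   Context: $\mathcal{G}_1,\dots,\mathcal{G}_p$ is a partition of $\{1,\dots,k\}$ into groups with $t_j=\#\mathcal{G}_j$; each index $\ell$ is written $\ell=(j,t)$ with $j$ the group containing $\ell$ and $t\in\{1,\dots,t_j\}$ its rank inside $\mathcal{G}_j$. $V_{\mathcal{I}}$ is the linear span of the columns $\tilde X_{\bullet\ell}$, $\ell\in\mathcal{I}$, and $P_{V_{\mathcal{I}}}$ the orthogonal projection onto it. $\gamma_{BT}=\sup\{|\Gamma_{(j,t)(j',t')}|: t\neq t'\}$ (over all $j,j'$ and admissible ranks), $\gamma_{BG}=\sup\{|\Gamma_{(j,t)(j',t)}|: j\ne j',\ t\le t_j\wedge t_{j'}\}$, and $\tau(\mathcal{I})=\#(\mathcal{I})\,\gamma_{BT}+\#\{j:\exists t,\ (j,t)\in\mathcal{I}\}\,\gamma_{BG}$. *)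

From Stdlib Require Import ClassicalEpsilon.
From mathcomp Require Import all_boot all_order all_algebra.
Set Implicit Arguments. Unset Strict Implicit. Unset Printing Implicit Defensive.
Import Order.TTheory GRing.Theory Num.Theory.
Local Open Scope ring_scope.

(* Group structure: index l : 'I_k is written l = (grp l, rk l), with
   grp l the group containing l and rk l in {1,..,t_{grp l}} its rank,
   the map l |-> (grp l, rk l) being injective. *)
Definition group_ranking (k p : nat) (grp : 'I_k -> 'I_p) (rk : 'I_k -> nat) :=
  (forall l l', grp l = grp l' -> rk l = rk l' -> l = l') /\
  (forall l, (1 <= rk l <= #|[set m | grp m == grp l]|)%N).

Section Defs.
Variables (R : realFieldType) (n k p : nat).

Definition Gram (X : 'M[R]_(n, k)) : 'M[R]_k := X^T *m X.

(* gamma_BT = sup { |Gamma_{(j,t)(j',t')}| : t <> t' } (0 if empty) *)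
Definition gammaBT (X : 'M[R]_(n, k)) (rk : 'I_k -> nat) : R :=
  \big[Num.max/0]_(l : 'I_k) \big[Num.max/0]_(l' : 'I_k | rk l != rk l')
     `|Gram X l l'|.

(* gamma_BG = sup { |Gamma_{(j,t)(j',t)}| : j <> j' } (0 if empty) *)
Definition gammaBG (X : 'M[R]_(n, k)) (grp : 'I_k -> 'I_p) (rk : 'I_k -> nat) : R :=
  \big[Num.max/0]_(l : 'I_k) \big[Num.max/0]_(l' : 'I_k | (grp l != grp l') && (rk l == rk l'))
     `|Gram X l l'|.

Definition tau (X : 'M[R]_(n, k)) (grp : 'I_k -> 'I_p) (rk : 'I_k -> nat)
    (I : {set 'I_k}) : R :=
  #|I|%:R * gammaBT X rk + #|[set j | [exists l in I, grp l == j]]|%:R * gammaBG X grp rk.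

Definition in_span (X : 'M[R]_(n, k)) (I : {set 'I_k}) (y : 'rV[R]_n) :=
  exists c : 'I_k -> R, y = \sum_(l in I) c l *: (col l X)^T.

Definition is_orth_proj (X : 'M[R]_(n, k)) (I : {set 'I_k}) (x y : 'rV[R]_n) :=
  in_span X I y /\ (forall l, l \in I -> (x - y) *m col l X = 0).

Definition orth_proj (X : 'M[R]_(n, k)) (I : {set 'I_k}) (x : 'rV[R]_n) : 'rV[R]_n :=
  epsilon (inhabits 0) (is_orth_proj X I x).

Definition sqnorm (y : 'rV[R]_n) : R := \sum_i (y 0 i) ^+ 2.

End Defs.

From Stdlib Require Import ClassicalEpsilon.
From mathcomp Require Import all_boot all_order all_algebra.
From mathcomp Require Import ring lra.
Set Implicit Arguments. Unset Strict Implicit. Unset Printing Implicit Defensive.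
Import Order.TTheory GRing.Theory Num.Theory.
Local Open Scope ring_scope.

(* Write the projection as [y = sum_(l in I) c_l X_l] and let [A] be the off-diagonal part of
   the Gram matrix of the columns in [I].  Then [<x, X_l> = <y, X_l> = ((1 + A) c)_l] and
   [|y|^2 = <c, (1 + A) c>].  The hypothesis [tau I <= nu] bounds every absolute row sum of
   [A] by [nu], so by the Schur test the spectrum of the symmetric matrix [1 + A] lies in
   [[1 - nu, 1 + nu]].  Hence [1 + A] is invertible, which makes the projection exist, and
   [(1 - nu) <c, (1 + A) c> <= |(1 + A) c|^2 <= (1 + nu) <c, (1 + A) c>]. *)

Section VectorForms.
Variables (R : realFieldType) (k : nat).
Implicit Types (u v w : 'I_k -> R) (A : 'I_k -> 'I_k -> R).

Definition dotv u v : R := \sum_l u l * v l.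

Definition rvmul u A : 'I_k -> R := fun l => \sum_l' u l' * A l' l.

Lemma dotvC u v : dotv u v = dotv v u.
Proof. by apply: eq_bigr => l _; rewrite mulrC. Qed.

Lemma dotvv_ge0 u : 0 <= dotv u u.
Proof. by apply: sumr_ge0 => l _; rewrite -expr2 sqr_ge0. Qed.

Lemma dotvDr u v w : dotv u (fun l => v l + w l) = dotv u v + dotv u w.
Proof. by rewrite /dotv -big_split; apply: eq_bigr => l _; rewrite mulrDr. Qed.

Lemma dotv_rvmulE u A v :
  dotv (rvmul u A) v = \sum_l \sum_l' A l' l * u l' * v l.
Proof.
by apply: eq_bigr => l _; rewrite mulr_suml; apply: eq_bigr => l' _; rewrite (mulrC (u l')).
Qed.

End VectorForms.

Section SchurTest.
Variables (R : realFieldType) (k : nat) (A : 'I_k -> 'I_k -> R) (nu : R).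
Hypothesis symA : forall l l', A l l' = A l' l.
Hypothesis rowA : forall l, \sum_l' `|A l l'| <= nu.
Implicit Types (u v : 'I_k -> R).

(* Schur test: each term is bounded by AM-GM, [2 t |u| |v| <= t^2 u^2 + v^2],
   and the absolute row (= column) sums of [A] are at most [nu]. *)
Lemma schur_form_bound t u v : 0 <= t ->
  2 * t * `|dotv (rvmul u A) v| <= nu * (t ^+ 2 * dotv u u + dotv v v).
Proof.
move=> t0; rewrite dotv_rvmulE.
have abs_le : `|\sum_l \sum_l' A l' l * u l' * v l|
    <= \sum_l \sum_l' `|A l' l| * `|u l'| * `|v l|.
  apply: le_trans (ler_norm_sum _ _ _) _; apply: ler_sum => l _.
  apply: le_trans (ler_norm_sum _ _ _) _; apply: ler_sum => l' _.
  by rewrite !normrM.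
have amgm : 2 * t * (\sum_l \sum_l' `|A l' l| * `|u l'| * `|v l|)
    <= \sum_l \sum_l' `|A l' l| * (t ^+ 2 * (u l' * u l') + v l * v l).
  rewrite mulr_sumr; apply: ler_sum => l _; rewrite mulr_sumr; apply: ler_sum => l' _.
  have sq : 2 * t * (`|u l'| * `|v l|) <= t ^+ 2 * (u l' * u l') + v l * v l.
    rewrite -!expr2 -[u l' ^+ 2]real_normK ?num_real // -[v l ^+ 2]real_normK ?num_real //.
    have := sqr_ge0 (t * `|u l'| - `|v l|); rewrite sqrrB; lra.
  have := ler_wpM2l (normr_ge0 (A l' l)) sq; congr (_ <= _); ring.
have split_rows : \sum_l \sum_l' `|A l' l| * (t ^+ 2 * (u l' * u l') + v l * v l)
    = t ^+ 2 * (\sum_l' u l' * u l' * \sum_l `|A l' l|)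
      + \sum_l v l * v l * \sum_l' `|A l l'|.
  transitivity (\sum_l (t ^+ 2 * \sum_l' `|A l' l| * (u l' * u l')
                         + v l * v l * \sum_l' `|A l l'|)).
    apply: eq_bigr => l _; rewrite !mulr_sumr -big_split /=.
    by apply: eq_bigr => l' _; rewrite (symA l l'); ring.
  rewrite big_split /= -mulr_sumr exchange_big /=; congr (_ * _ + _).
  by apply: eq_bigr => l' _; rewrite mulr_sumr; apply: eq_bigr => l _; ring.
have row_le w : \sum_l w l * w l * \sum_l' `|A l l'| <= nu * dotv w w.
  rewrite /dotv mulr_sumr; apply: ler_sum => l _; rewrite mulrC.
  by apply: ler_wpM2r; rewrite // -expr2 sqr_ge0.
have u_le : \sum_l' u l' * u l' * \sum_l `|A l' l| <= nu * dotv u u.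
  by apply: le_trans (row_le u); apply: ler_sum => l _; under eq_bigr do rewrite symA.
have tu_le := ler_wpM2l (sqr_ge0 t) u_le; have v_le := row_le v.
have two_t : 0 <= 2 * t by lra.
have := ler_wpM2l two_t abs_le; lra.
Qed.

Lemma schur_quad_bound u : `|dotv u (rvmul u A)| <= nu * dotv u u.
Proof.
have := schur_form_bound u u ler01; rewrite dotvC expr1n mul1r mulr1; lra.
Qed.

Lemma schur_image_bound u : 0 < nu ->
  dotv (rvmul u A) (rvmul u A) <= nu ^+ 2 * dotv u u.
Proof.
move=> nu0; have := schur_form_bound u (rvmul u A) (ltW nu0).
rewrite (mulrC 2) -mulrA ler_pM2l // => bound.
have := ler_norm (dotv (rvmul u A) (rvmul u A)); lra.
Qed.

Section NearIdentity.
Variable u : 'I_k -> R.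
Let w : 'I_k -> R := fun l => u l + rvmul u A l.

Lemma near_identity_form_ge : (1 - nu) * dotv u u <= dotv u w.
Proof.
have := schur_quad_bound u; rewrite /w dotvDr.
have := ler_norm (- dotv u (rvmul u A)); rewrite normrN; lra.
Qed.

(* On the spectrum [[1 - nu, 1 + nu]] of [1 + A] we have [(1 - nu) s <= s^2 <= (1 + nu) s];
   the lower half is obtained from [0 <= |nu u + u A|^2]. *)
Lemma near_identity_sandwich : 0 < nu -> nu < 1 ->
  dotv w w <= (1 + nu) * dotv u w /\ (1 - nu) * dotv u w <= dotv w w.
Proof.
move=> nu0 nu1; set e := rvmul u A.
have uwE : dotv u w = dotv u u + dotv u e by rewrite dotvDr.
have wwE : dotv w w = dotv u u + 2 * dotv u e + dotv e e.
  rewrite /dotv mulr_sumr -!big_split; apply: eq_bigr => l _ /=; rewrite /w /e; ring.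
have shifted_ge0 : 0 <= nu ^+ 2 * dotv u u + 2 * nu * dotv u e + dotv e e.
  have := dotvv_ge0 (fun l => nu * u l + e l); congr (_ <= _).
  rewrite /dotv !mulr_sumr -!big_split; apply: eq_bigr => l _ /=; ring.
have C_le := schur_quad_bound u; have E_le := schur_image_bound u nu0.
have C_ge := ler_norm (- dotv u e); rewrite normrN in C_ge.
have C_le' := ler_norm (dotv u e).
have N_ge0 := dotvv_ge0 u.
rewrite uwE wwE; split; nra.
Qed.

Lemma near_identity_injective : nu < 1 -> (forall l, w l = 0) -> forall l, u l = 0.
Proof.
move=> nu1 w0 l; have := near_identity_form_ge.
rewrite [dotv u w]big1 => [|l' _]; last by rewrite w0 mulr0.
rewrite pmulr_rle0 ?subr_gt0 // => N_le0.
have N0 : dotv u u = 0 by apply/eqP; rewrite eq_le N_le0 dotvv_ge0.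
have sq_ge0 l' : true -> 0 <= u l' * u l' by rewrite -expr2 sqr_ge0.
have /eqP := @psumr_eq0P _ _ _ _ sq_ge0 N0 l isT.
by rewrite mulf_eq0 orbb => /eqP.
Qed.
End NearIdentity.

End SchurTest.

Section OffDiagonalGram.
Variables (R : realFieldType) (n k p : nat) (X : 'M[R]_(n, k)) (I : {set 'I_k}).

Definition offgram (l l' : 'I_k) : R :=
  if [&& l \in I, l' \in I & l != l'] then Gram X l l' else 0.

Lemma GramE l l' : Gram X l l' = \sum_i X i l * X i l'.
Proof. by rewrite !mxE; apply: eq_bigr => i _; rewrite !mxE. Qed.

Lemma offgram_sym l l' : offgram l l' = offgram l' l.
Proof.
rewrite /offgram eq_sym andbCA !GramE.
by case: ifP => // _; apply: eq_bigr => i _; rewrite mulrC.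
Qed.

Lemma offgram_outl l l' : l \notin I -> offgram l l' = 0.
Proof. by rewrite /offgram => /negbTE ->. Qed.

Lemma offgram_outr l l' : l' \notin I -> offgram l l' = 0.
Proof. by move=> /negbTE l'I; rewrite /offgram l'I andbF. Qed.

Variables (grp : 'I_k -> 'I_p) (rk : 'I_k -> nat).

Lemma gram_le_gammaBT l l' : rk l != rk l' -> `|Gram X l l'| <= gammaBT X rk.
Proof.
move=> rk_neq; apply: le_trans (le_bigmax _ _ l).
exact: (le_bigmax_cond _ (fun l' => `|Gram X l l'|) rk_neq).
Qed.

Lemma gram_le_gammaBG l l' : grp l != grp l' -> rk l == rk l' ->
  `|Gram X l l'| <= gammaBG X grp rk.
Proof.
move=> grp_neq rk_eq; apply: le_trans (le_bigmax _ _ l).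
by apply: (le_bigmax_cond _ (fun l' => `|Gram X l l'|)); rewrite grp_neq.
Qed.

Lemma offgram_row_le_tau l : group_ranking grp rk ->
  \sum_l' `|offgram l l'| <= tau X grp rk I.
Proof.
move=> [rank_inj _].
have gBT0 : 0 <= gammaBT X rk by apply: bigmax_ge_id.
have gBG0 : 0 <= gammaBG X grp rk by apply: bigmax_ge_id.
case lI: (l \in I); last first.
  rewrite big1 => [|l' _]; last by rewrite offgram_outl ?lI ?normr0.
  by apply: addr_ge0; apply: mulr_ge0.
set T := [set l' in I | rk l != rk l'].
set S := [set l' in I | (l' != l) && (rk l' == rk l)].
pose bound l' := (if l' \in T then gammaBT X rk else 0)
                  + (if l' \in S then gammaBG X grp rk else 0).
have entry_le l' : `|offgram l l'| <= bound l'.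
  rewrite /bound /offgram lI /= !inE.
  case l'I: (l' \in I) => /=; last by rewrite normr0 addr0.
  have [->|ll'] /= := eqVneq l l'; first by rewrite normr0; case: ifP; rewrite ?addr0.
  rewrite (eq_sym (rk l')); have [rk_eq|rk_neq] /= := eqVneq (rk l) (rk l').
    rewrite add0r; apply: gram_le_gammaBG; last by rewrite rk_eq.
    by apply/eqP => grp_eq; move: ll'; rewrite (rank_inj _ _ grp_eq rk_eq) eqxx.
  by rewrite addr0; apply: gram_le_gammaBT; rewrite rk_neq.
apply: (@le_trans _ _ (\sum_l' bound l')); first by apply: ler_sum => l' _.
rewrite /bound big_split /= -!big_mkcond /= !sumr_const.
rewrite -[_ *+ #|T|]mulr_natl -[_ *+ #|S|]mulr_natl /tau.
apply: lerD; apply: ler_wpM2r => //; rewrite ler_nat.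
  by apply: subset_leq_card; apply/subsetP => l'; rewrite inE => /andP[].
rewrite -(card_in_imset (f := grp)); last first.
  move=> a b; rewrite !inE => /and3P[_ _ /eqP rka] /and3P[_ _ /eqP rkb] grp_eq.
  by apply: rank_inj; rewrite ?rka ?rkb.
apply: subset_leq_card; apply/subsetP => j /imsetP[l' + ->].
by rewrite !inE => /andP[l'I _]; apply/existsP; exists l'; rewrite l'I eqxx.
Qed.

End OffDiagonalGram.

Section ColumnSpan.
Variables (R : realFieldType) (n k : nat) (X : 'M[R]_(n, k)) (I : {set 'I_k}).
Implicit Types (c : 'I_k -> R) (x y : 'rV[R]_n).

Definition span_vec c : 'rV[R]_n := \sum_(l in I) c l *: (col l X)^T.

Lemma span_vecE c i : span_vec c 0 i = \sum_(l in I) c l * X i l.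
Proof. by rewrite summxE; apply: eq_bigr => l _; rewrite !mxE. Qed.

Lemma span_vec_dot_col c l :
  \sum_i span_vec c 0 i * X i l = \sum_(l' in I) c l' * Gram X l' l.
Proof.
under eq_bigr do rewrite span_vecE mulr_suml.
rewrite exchange_big /=; apply: eq_bigr => l' _.
by rewrite GramE mulr_sumr; apply: eq_bigr => i _; rewrite mulrA.
Qed.

Lemma sqnorm_span_vec c :
  sqnorm (span_vec c) = \sum_(l in I) c l * \sum_i span_vec c 0 i * X i l.
Proof.
rewrite /sqnorm; under eq_bigr do rewrite expr2 {2}span_vecE mulr_sumr.
rewrite exchange_big; apply: eq_bigr => l _; rewrite mulr_sumr.
by apply: eq_bigr => i _; rewrite mulrCA.
Qed.

Lemma orth_dot_col x y l : (x - y) *m col l X = 0 ->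
  \sum_i x 0 i * X i l = \sum_i y 0 i * X i l.
Proof.
move/matrixP/(_ 0 0); rewrite !mxE; under eq_bigr do rewrite !mxE mulrBl.
by rewrite sumrB => /eqP; rewrite subr_eq0 => /eqP.
Qed.

End ColumnSpan.

Section Projection.
Variables (R : realFieldType) (n k : nat) (X : 'M[R]_(n, k)) (I : {set 'I_k}) (nu : R).
Hypothesis unit_cols : forall l, Gram X l l = 1.
Hypothesis nu_lt1 : nu < 1.
Hypothesis offgram_row_le : forall l, \sum_l' `|offgram X I l l'| <= nu.

Let A := offgram X I.

Lemma gram_onI c l : l \in I ->
  \sum_(l' in I) c l' * Gram X l' l = c l + rvmul c A l.
Proof.
move=> lI; rewrite (bigD1 l) //= unit_cols mulr1; congr (_ + _).
rewrite /rvmul [RHS](bigD1 l) //= /A /offgram eqxx !andbF mulr0 add0r.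
rewrite [LHS]big_mkcond [RHS]big_mkcond; apply: eq_bigr => i _ /=.
by rewrite lI; case: (i \in I); case: (i != l); rewrite ?mulr0.
Qed.

Definition near_identity_mx : 'M[R]_k := 1%:M + \matrix_(l', l) A l' l.

Lemma mul_near_identity_mx (v : 'rV[R]_k) l :
  (v *m near_identity_mx) 0 l = v 0 l + rvmul (fun l' => v 0 l') A l.
Proof.
by rewrite mulmxDr mulmx1 !mxE; congr (_ + _); apply: eq_bigr => l' _; rewrite mxE.
Qed.

Lemma near_identity_mx_unit : near_identity_mx \in unitmx.
Proof.
rewrite -row_free_unit -kermx_eq0; apply/rowV0P => v /sub_kermxP vM0.
apply/rowP => l; rewrite mxE.
apply: (near_identity_injective (offgram_sym X I) offgram_row_le nu_lt1).
by move=> l'; rewrite -mul_near_identity_mx vM0 mxE.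
Qed.

Lemma orth_proj_exists (x : 'rV[R]_n) : exists y, is_orth_proj X I x y.
Proof.
pose b : 'rV[R]_k := \row_l \sum_i x 0 i * X i l.
pose c := b *m invmx near_identity_mx.
have cM : c *m near_identity_mx = b by rewrite mulmxKV ?near_identity_mx_unit.
exists (span_vec X I (fun l => c 0 l)); split; first by exists (fun l => c 0 l).
move=> l lI; apply/rowP => j; rewrite ord1 !mxE.
under eq_bigr do rewrite !mxE mulrBl.
by rewrite sumrB span_vec_dot_col gram_onI // -mul_near_identity_mx cM mxE subrr.
Qed.

Lemma orth_proj_sandwich (x z : 'rV[R]_n) : 0 < nu -> is_orth_proj X I x z ->
  \sum_(l in I) (\sum_i x 0 i * X i l) ^+ 2 <= (1 + nu) * sqnorm z /\
  (1 - nu) * sqnorm z <= \sum_(l in I) (\sum_i x 0 i * X i l) ^+ 2.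
Proof.
move=> nu_gt0 [[c ->] orth].
pose d l := if l \in I then c l else 0.
have d_out l : l \notin I -> d l = 0 by rewrite /d => /negbTE ->.
have span_d : \sum_(l in I) c l *: (col l X)^T = span_vec X I d.
  by apply: eq_bigr => l lI; rewrite /d lI.
rewrite span_d in orth *; set y := span_vec X I d in orth *.
pose w l := d l + rvmul d A l.
have w_out l : l \notin I -> w l = 0.
  move=> lI; rewrite /w /rvmul d_out // add0r big1 // => l' _.
  by rewrite /A offgram_outr ?mulr0.
have sum_onI (f : 'I_k -> R) : (forall l, l \notin I -> f l = 0) ->
    \sum_(l in I) f l = \sum_l f l.
  by move=> f_out; rewrite [RHS](bigID (mem I)) /= [T in _ + T]big1 ?addr0.
have y_dot_col l : l \in I -> \sum_i y 0 i * X i l = w l.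
  by move=> lI; rewrite span_vec_dot_col gram_onI.
have x_dot_col l : l \in I -> \sum_i x 0 i * X i l = w l.
  by move=> lI; rewrite (orth_dot_col (orth l lI)) y_dot_col.
have sqnorm_yE : sqnorm y = dotv d w.
  rewrite sqnorm_span_vec /dotv -[RHS]sum_onI => [|l /d_out ->]; last by rewrite mul0r.
  by apply: eq_bigr => l lI; rewrite y_dot_col.
have sum_sqE : \sum_(l in I) (\sum_i x 0 i * X i l) ^+ 2 = dotv w w.
  rewrite /dotv -[RHS]sum_onI => [|l /w_out ->]; last by rewrite mulr0.
  by apply: eq_bigr => l lI; rewrite x_dot_col // expr2.
rewrite sqnorm_yE sum_sqE.
exact: (near_identity_sandwich (offgram_sym X I) offgram_row_le d nu_gt0 nu_lt1).
Qed.

End Projection.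

Theorem lemma2 (R : realFieldType) (n k p : nat) (grp : 'I_k -> 'I_p) (rk : 'I_k -> nat)
  (X : 'M[R]_(n, k)) (nu : R) (I : {set 'I_k}) :
  group_ranking grp rk ->
  (forall l, Gram X l l = 1) ->
  0 < nu < 1 ->
  tau X grp rk I <= nu ->
  forall x : 'rV[R]_n,
    (1 + nu)^-1 * \sum_(l in I) (\sum_i x 0 i * X i l) ^+ 2
      <= sqnorm (orth_proj X I x) /\
    sqnorm (orth_proj X I x)
      <= (1 - nu)^-1 * \sum_(l in I) (\sum_i x 0 i * X i l) ^+ 2.
Proof.
move=> ranking unit_cols /andP[nu_gt0 nu_lt1] tau_le x.
have row_le l : \sum_l' `|offgram X I l l'| <= nu.
  exact: le_trans (offgram_row_le_tau X I l ranking) tau_le.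
have proj_x : is_orth_proj X I x (orth_proj X I x).
  apply: epsilon_spec; exact: (orth_proj_exists unit_cols nu_lt1 row_le).
have [upper lower] := orth_proj_sandwich unit_cols nu_lt1 row_le nu_gt0 proj_x.
have [pos_plus pos_minus] : 0 < 1 + nu /\ 0 < 1 - nu by split; lra.
by rewrite ler_pdivrMl // ler_pdivlMl.
Qed.
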